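(* Let $q\in\mathcal{Q}_\pm$ with $q(1)\ne0$ and $q(-1)\ne0$, let $a,b\in\mathbb{R}$, and suppose that $\rho$ is a quasi-rational function with $\rho'(x)=q(x)(1-x)^a(1+x)^b$. Then exactly one of the following mutually exclusive possibilities holds: (i) $\rho\in(1-x)^{a+1}(1+x)^{b+1}\mathcal{Q}_\pm$; (ii) $\rho\in(1+x)^{b+1}\mathcal{Q}_\pm$, $a\in\mathbb{N}_0$ and $\rho(1)\ne0$; (iii) $\rho\in(1-x)^{a+1}\mathcal{Q}_\pm$, $b\in\mathbb{N}_0$ and $\rho(-1)\ne0$; (iv) $\rho\in\mathcal{Q}_\pm$, $a,b\in\mathbb{N}_0$, and $\rho(1)\ne0$, $\rho(-1)\ne0$.
   Context: $\mathcal{Q}_\pm$ denotes the set of real rational functions that are regular at $x=1$ and at $x=-1$. A function $\rho$ is quasi-rational if $\rho'/\rho$ is rational. *)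

From mathcomp Require Import all_boot all_order all_algebra.
From mathcomp Require Import all_classical all_reals all_analysis.
Set Implicit Arguments. Unset Strict Implicit. Unset Printing Implicit Defensive.
Import Order.TTheory GRing.Theory Num.Theory.
Local Open Scope ring_scope.

(* Functions are considered on the open interval (-1,1).  An identity
   between (quasi-)rational functions is required to hold at every point
   of (-1,1) except finitely many (poles / zeros). *)
Definition cofin11 {R : realType} (P : R -> Prop) : Prop :=
  exists s : seq R, forall x : R, -1 < x < 1 -> x \notin s -> P x.

(* rational function p/r with p r real polynomials, regular at 1 and -1 *)
Definition regpm {R : realType} (r : {poly R}) : Prop :=
  r.[1] != 0 /\ r.[-1] != 0.

Definition in_wQpm {R : realType} (w f : R -> R) : Prop :=
  exists p r : {poly R}, regpm r /\
    cofin11 (fun x => f x = w x * (p.[x] / r.[x])).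

Definition quasi_rational {R : realType} (rho : R -> R) : Prop :=
  exists u v : {poly R}, v != 0 /\
    cofin11 (fun x => derivable rho x 1 /\ rho x != 0 /\
                      derive1 rho x / rho x = u.[x] / v.[x]).

Definition is_nat0 {R : realType} (a : R) : Prop := exists n : nat, a = n%:R.

Definition case_i {R : realType} (a b : R) (rho : R -> R) : Prop :=
  in_wQpm (fun x => powR (1 - x) (a + 1) * powR (1 + x) (b + 1)) rho.

(* (ii) rho = (1+x)^(b+1) p/r with p/r in Q_pm, a in N_0, and
   rho(1) = 2^(b+1) p(1)/r(1) <> 0 *)
Definition case_ii {R : realType} (a b : R) (rho : R -> R) : Prop :=
  (exists p r : {poly R}, regpm r /\
    cofin11 (fun x => rho x = powR (1 + x) (b + 1) * (p.[x] / r.[x])) /\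
    powR (1 + 1) (b + 1) * (p.[1] / r.[1]) != 0) /\ is_nat0 a.

(* (iii) rho = (1-x)^(a+1) p/r, b in N_0, rho(-1) = 2^(a+1) p(-1)/r(-1) <> 0 *)
Definition case_iii {R : realType} (a b : R) (rho : R -> R) : Prop :=
  (exists p r : {poly R}, regpm r /\
    cofin11 (fun x => rho x = powR (1 - x) (a + 1) * (p.[x] / r.[x])) /\
    powR (1 - (-1)) (a + 1) * (p.[-1] / r.[-1]) != 0) /\ is_nat0 b.

Definition case_iv {R : realType} (a b : R) (rho : R -> R) : Prop :=
  (exists p r : {poly R}, regpm r /\
    cofin11 (fun x => rho x = p.[x] / r.[x]) /\
    p.[1] / r.[1] != 0 /\ p.[-1] / r.[-1] != 0) /\ is_nat0 a /\ is_nat0 b.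

From mathcomp Require Import all_boot all_order all_algebra.
From mathcomp Require Import all_classical all_reals all_analysis.
From mathcomp Require Import ring lra zify.
Set Implicit Arguments. Unset Strict Implicit. Unset Printing Implicit Defensive.
Import Order.TTheory GRing.Theory Num.Theory numFieldNormedType.Exports.
Local Open Scope ring_scope.

(* Let [w = (1 - x)^a (1 + x)^b].  Since [rho'/rho = u/v] and [rho' = (qn/qd) w],
   we get [rho = w N / D] with [N = qn v] and [D = qd u], and differentiating
   [rho D = w N] yields the polynomial identity
     [qn D^2 (1 - x^2) = qd ((b (1 - x) - a (1 + x)) N D + (1 - x^2) (N' D - N D'))].
   Let [1] be a root of order [i1] of [N] and [i2] of [D].  The left side vanishes
   to order exactly [2 i2 + 1] at [1]; the right side is [(x - 1)^(i1 + i2)] times a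
   polynomial whose value at [1] is a nonzero multiple of [a + i1 - i2].  Hence
   either [i1 = i2 + 1], and [(1 - x)^a] absorbs one more factor [1 - x], or
   [a = i2 - i1] with [i1 <= i2], and [(1 - x)^a] cancels against the polynomial
   factors, leaving [rho(1) <> 0].  The same analysis at [-1] gives the four cases.
   They exclude each other because two such representations of [rho] would force
   a polynomial that is nonzero at [1] or [-1] to vanish there. *)

Section CofiniteIdentities.
Variable R : realType.
Implicit Types (P Q : R -> Prop) (p q : {poly R}).

Lemma cofin11W P Q :
  (forall x, -1 < x < 1 -> P x -> Q x) -> cofin11 P -> cofin11 Q.
Proof. by move=> PQ [s Ps]; exists s => x x11 xs; apply/PQ/Ps. Qed.

Lemma cofin11_and P Q : cofin11 P -> cofin11 Q -> cofin11 (fun x => P x /\ Q x).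
Proof.
move=> [s Ps] [t Qt]; exists (s ++ t) => x x11.
by rewrite mem_cat negb_or => /andP[xs xt]; split; [exact: Ps | exact: Qt].
Qed.

Lemma cofin11_nbhs P : cofin11 P -> cofin11 (fun x => \forall y \near x, P y).
Proof.
move=> [s Ps]; exists s => x /andP[x_gtN1 x_lt1] xs.
pose h := \prod_(z <- s) ('X - z%:P).
have : \forall y \near x, h.[y] != 0.
  apply: (@cvgr_neq0 R R^o R (nbhs x) _ (horner h)); first exact: continuous_horner.
  by rewrite -/(root h x) root_prod_XsubC.
apply: filterS3 (lt_nbhsr x_gtN1) (lt_nbhsl x_lt1) => y y_gtN1 y_lt1.
by rewrite -/(root h y) root_prod_XsubC => ys; apply: Ps; rewrite ?y_gtN1.
Qed.

Lemma poly_roots_finite p : p != 0 -> exists s : seq R, forall x, root p x -> x \in s.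
Proof.
have [n] := ubnP (size p); elim: n p => // n IHn p size_p p_neq0.
have [[r pr] | no_root] := pselect (exists r, root p r); last first.
  by exists [::] => x px; case: no_root; exists x.
have [q Dp] := factor_theorem p r pr.
have q_neq0 : q != 0 by apply: contraNneq p_neq0 => q0; rewrite Dp q0 mul0r.
have size_q : (size q < n)%N.
  by rewrite Dp size_Mmonic ?monicXsubC // size_XsubC addn2 in size_p.
have [s Hs] := IHn q size_q q_neq0.
exists (r :: s) => x; rewrite Dp rootM root_XsubC in_cons.
by case/orP=> [/Hs xs | xr]; rewrite ?xs ?xr ?orbT.
Qed.

Lemma cofin11_horner_neq0 p : p != 0 -> cofin11 (fun x => p.[x] != 0).
Proof. by case/poly_roots_finite=> s Hs; exists s => x _; apply: contra => /Hs. Qed.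

Lemma poly_eq0_on11 p : (forall x, -1 < x < 1 -> p.[x] = 0) -> p = 0.
Proof.
move=> p0; apply: contraTeq isT => p_neq0.
pose rs := [seq (i.+2%:R : R)^-1 | i <- iota 0 (size p)].
have p_rs : all (root p) rs.
  apply/allP => _ /mapP[i _ ->]; apply/eqP/p0.
  have i_gt0 : (0 : R) < i.+2%:R^-1 by rewrite invr_gt0 ltr0n.
  by rewrite (lt_trans _ i_gt0) ?ltrN10 //= invf_lt1 ?ltr0n ?ltr1n.
have uniq_rs : uniq rs.
  rewrite map_inj_uniq ?iota_uniq // => i j /invr_inj/eqP.
  by rewrite eqr_nat => /eqP[].
by have := max_poly_roots p_neq0 p_rs uniq_rs; rewrite size_map size_iota ltnn.
Qed.

Lemma poly_eq0_cofin11 p : cofin11 (fun x => p.[x] = 0) -> p = 0.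
Proof.
case=> s p0; have s_neq0 : \prod_(z <- s) ('X - z%:P) != 0.
  exact/monic_neq0/monic_prod_XsubC.
apply/eqP; rewrite -(mulIr_eq0 _ (mulIf s_neq0)).
apply/eqP/poly_eq0_on11 => x x11; rewrite hornerM.
have [xs | xs] := boolP (x \in s); last by rewrite p0 ?mul0r.
by move: xs; rewrite -root_prod_XsubC => /eqP ->; rewrite mulr0.
Qed.

Lemma poly_eq_cofin11 p q : cofin11 (fun x => p.[x] = q.[x]) -> p = q.
Proof.
move=> pq; apply/eqP; rewrite -subr_eq0; apply/eqP/poly_eq0_cofin11.
by apply: cofin11W pq => x _ pqx; rewrite hornerD hornerN pqx subrr.
Qed.

Lemma regpm_neq0 p : regpm p -> p != 0.
Proof. by case=> p_1 _; apply: contraNneq p_1 => ->; rewrite horner0. Qed.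

Lemma regpmZ (k : R) p : k != 0 -> regpm p -> regpm (k *: p).
Proof. by move=> k_neq0 [p_1 p_N1]; rewrite /regpm !hornerZ !mulf_neq0. Qed.

End CofiniteIdentities.

Section Exclusivity.
Variable R : realType.
Implicit Types (a b : R) (rho : R -> R).

Lemma powR_natS (t : R) (k : nat) : 0 <= t -> powR t (k%:R + 1) = t ^+ k.+1.
Proof. by move=> t_ge0; rewrite -mulrSr powR_mulrn. Qed.

Lemma representation_root (rho W1 W2 C : R -> R) (F G p1 r1 p2 r2 : {poly R}) c :
  F.[c] = 0 -> G.[c] != 0 -> r1.[c] != 0 -> r2 != 0 ->
  (forall x, -1 < x < 1 -> [/\ C x != 0, W1 x = C x * F.[x] & W2 x = C x * G.[x]]) ->
  cofin11 (fun x => rho x = W1 x * (p1.[x] / r1.[x])) ->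
  cofin11 (fun x => rho x = W2 x * (p2.[x] / r2.[x])) ->
  p2.[c] = 0.
Proof.
move=> Fc Gc r1c r2_neq0 W12 rho1 rho2.
have r1_neq0 : r1 != 0 by apply: contraNneq r1c => ->; rewrite horner0.
have FG : F * p1 * r2 = G * p2 * r1.
  apply: poly_eq_cofin11; move: (cofin11_and (cofin11_and rho1 rho2)
    (cofin11_and (cofin11_horner_neq0 r1_neq0) (cofin11_horner_neq0 r2_neq0))).
  apply: cofin11W => x x11 [[rho1x rho2x] [r1x r2x]].
  have [Cx W1x W2x] := W12 x x11.
  have e : F.[x] * (p1.[x] / r1.[x]) = G.[x] * (p2.[x] / r2.[x]).
    by apply: (mulfI Cx); rewrite /= (mulrA (C x)) -W1x -rho1x rho2x W2x -mulrA.
  rewrite !hornerM.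
  have -> : F.[x] * p1.[x] * r2.[x] = F.[x] * (p1.[x] / r1.[x]) * (r1.[x] * r2.[x]).
    by field.
  by rewrite e; field.
have /(congr1 (horner^~ c))/eqP := FG.
by rewrite !hornerM Fc !mul0r eq_sym !mulf_eq0 (negPf Gc) (negPf r1c) orbF /= => /eqP.
Qed.

Lemma case_i_ii_disjoint a b rho : ~ (case_i a b rho /\ case_ii a b rho).
Proof.
move=> [[p1 [r1 [[r1_1 _] rho1]]] [[p2 [r2 [r2_reg [rho2 rho_1]]]] [k ak]]]; subst a.
move: rho_1; suff -> : p2.[1] = 0 by rewrite mul0r mulr0 eqxx.
apply: (representation_root (C := fun x => powR (1 + x) (b + 1))
  (F := (1 - 'X) ^+ k.+1) (G := 1) _ _ r1_1 (regpm_neq0 r2_reg) _ rho1 rho2).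
- by rewrite !hornerE subrr expr0n.
- by rewrite !hornerE oner_neq0.
- move=> x /andP[x_gtN1 x_lt1]; split.
  + by rewrite gt_eqF // powR_gt0 //; lra.
  + by rewrite powR_natS ?subr_ge0 ?ltW // !hornerE mulrC.
  + by rewrite hornerE mulr1.
Qed.

Lemma case_i_iii_disjoint a b rho : ~ (case_i a b rho /\ case_iii a b rho).
Proof.
move=> [[p1 [r1 [[_ r1_N1] rho1]]] [[p3 [r3 [r3_reg [rho3 rho_N1]]]] [m bm]]]; subst b.
move: rho_N1; suff -> : p3.[-1] = 0 by rewrite mul0r mulr0 eqxx.
apply: (representation_root (C := fun x => powR (1 - x) (a + 1))
  (F := (1 + 'X) ^+ m.+1) (G := 1) _ _ r1_N1 (regpm_neq0 r3_reg) _ rho1 rho3).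
- by rewrite !hornerE addrN expr0n.
- by rewrite !hornerE oner_neq0.
- move=> x /andP[x_gtN1 x_lt1]; split.
  + by rewrite gt_eqF // powR_gt0 //; lra.
  + by rewrite !hornerE powR_natS //; lra.
  + by rewrite hornerE mulr1.
Qed.

Lemma case_i_iv_disjoint a b rho : ~ (case_i a b rho /\ case_iv a b rho).
Proof.
move=> [[p1 [r1 [[r1_1 _] rho1]]] [[p4 [r4 [r4_reg [rho4 [rho_1 _]]]]] [[k ak] [m bm]]]].
subst a b; move: rho_1; suff -> : p4.[1] = 0 by rewrite mul0r eqxx.
apply: (representation_root (C := fun=> 1) (W2 := fun=> 1)
  (F := (1 - 'X) ^+ k.+1 * (1 + 'X) ^+ m.+1) (G := 1) _ _ r1_1 (regpm_neq0 r4_reg) _ rho1).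
- by rewrite !hornerE subrr expr0n mul0r.
- by rewrite !hornerE oner_neq0.
- move=> x /andP[x_gtN1 x_lt1]; split; rewrite ?mul1r ?hornerE ?oner_neq0 //.
  by rewrite !powR_natS //; lra.
- by apply: cofin11W rho4 => x _ ->; rewrite mul1r.
Qed.

Lemma case_ii_iii_disjoint a b rho : ~ (case_ii a b rho /\ case_iii a b rho).
Proof.
move=> [[[p2 [r2 [r2_reg [rho2 rho_1]]]] [k ak]] [[p3 [r3 [[r3_1 _] [rho3 _]]]] [m bm]]].
subst a b; move: rho_1; suff -> : p2.[1] = 0 by rewrite mul0r mulr0 eqxx.
apply: (representation_root (C := fun=> 1)
  (F := (1 - 'X) ^+ k.+1) (G := (1 + 'X) ^+ m.+1) _ _ r3_1 (regpm_neq0 r2_reg) _ rho3 rho2).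
- by rewrite !hornerE subrr expr0n.
- by rewrite !hornerE expf_neq0 //; lra.
- move=> x /andP[x_gtN1 x_lt1]; split; rewrite ?mul1r ?hornerE ?oner_neq0 //.
  + by rewrite powR_natS //; lra.
  + by rewrite powR_natS //; lra.
Qed.

Lemma case_ii_iv_disjoint a b rho : ~ (case_ii a b rho /\ case_iv a b rho).
Proof.
move=> [[[p2 [r2 [[_ r2_N1] [rho2 _]]]] _] [[p4 [r4 [r4_reg [rho4 [_ rho_N1]]]]] [_ [m bm]]]].
subst b; move: rho_N1; suff -> : p4.[-1] = 0 by rewrite mul0r eqxx.
apply: (representation_root (C := fun=> 1) (W2 := fun=> 1)
  (F := (1 + 'X) ^+ m.+1) (G := 1) _ _ r2_N1 (regpm_neq0 r4_reg) _ rho2).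
- by rewrite !hornerE addrN expr0n.
- by rewrite !hornerE oner_neq0.
- move=> x /andP[x_gtN1 x_lt1]; split; rewrite ?mul1r ?hornerE ?oner_neq0 //.
  by rewrite powR_natS //; lra.
- by apply: cofin11W rho4 => x _ ->; rewrite mul1r.
Qed.

Lemma case_iii_iv_disjoint a b rho : ~ (case_iii a b rho /\ case_iv a b rho).
Proof.
move=> [[[p3 [r3 [[r3_1 _] [rho3 _]]]] _] [[p4 [r4 [r4_reg [rho4 [rho_1 _]]]]] [[k ak] _]]].
subst a; move: rho_1; suff -> : p4.[1] = 0 by rewrite mul0r eqxx.
apply: (representation_root (C := fun=> 1) (W2 := fun=> 1)
  (F := (1 - 'X) ^+ k.+1) (G := 1) _ _ r3_1 (regpm_neq0 r4_reg) _ rho3).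
- by rewrite !hornerE subrr expr0n.
- by rewrite !hornerE oner_neq0.
- move=> x /andP[x_gtN1 x_lt1]; split; rewrite ?mul1r ?hornerE ?oner_neq0 //.
  by rewrite powR_natS //; lra.
- by apply: cofin11W rho4 => x _ ->; rewrite mul1r.
Qed.

End Exclusivity.

Section JacobiWeight.
Variable R : realType.
Implicit Types (a b x : R) (rho : R -> R).

Definition jacobi_weight a b x := powR (1 - x) a * powR (1 + x) b.

Lemma jacobi_weight_gt0 a b x : -1 < x < 1 -> 0 < jacobi_weight a b x.
Proof. by case/andP=> x_gtN1 x_lt1; rewrite mulr_gt0 // powR_gt0 //; lra. Qed.

Lemma is_derive_jacobi_weight a b x : -1 < x < 1 ->
  is_derive x 1 (jacobi_weight a b)
    (jacobi_weight a b x * (b / (1 + x) - a / (1 - x))).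
Proof.
case/andP=> x_gtN1 x_lt1; have x_m : 0 < 1 - x by lra.
have x_p : 0 < 1 + x by lra.
have d_m : is_derive x 1 (fun y : R => 1 - y) (-1).
  apply: is_derive_eq (is_deriveB (is_derive_cst (1 : R) x 1) (is_derive_id x 1)) _.
  by rewrite sub0r.
have d_p : is_derive x 1 (fun y : R => 1 + y) 1.
  apply: is_derive_eq (is_deriveD (is_derive_cst (1 : R) x 1) (is_derive_id x 1)) _.
  by rewrite add0r.
have := is_deriveM
  (@is_derive1_comp _ (fun t => powR t a) (fun y => 1 - y) x _ _ (is_derive1_powR a x_m) d_m)
  (@is_derive1_comp _ (fun t => powR t b) (fun y => 1 + y) x _ _ (is_derive1_powR b x_p) d_p).
move/is_derive_eq; apply; rewrite /jacobi_weight /=.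
rewrite !powRB ?powRr1 ?(gt_eqF x_m) ?(gt_eqF x_p) ?implybT ?ltW //.
by rewrite /GRing.scale /=; field; rewrite !gt_eqF.
Qed.

(* Clearing the denominators of [(w N / D)' = (qn / qd) w] for the Jacobi weight [w],
   whose logarithmic derivative is [b / (1 + x) - a / (1 - x)]. *)
Definition jacobi_defect a b (qn qd N D : {poly R}) : {poly R} :=
  qn * D ^+ 2 * (1 - 'X^2)
  - qd * ((b%:P * (1 - 'X) - a%:P * (1 + 'X)) * N * D
          + (1 - 'X^2) * (N^`() * D - N * D^`())).

Lemma jacobi_defect_root a b rho (qn qd N D : {poly R}) x :
  -1 < x < 1 -> D.[x] != 0 -> qd.[x] != 0 ->
  derivable rho x 1 -> derive1 rho x = qn.[x] / qd.[x] * jacobi_weight a b x ->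
  (\forall y \near x, rho y * D.[y] = jacobi_weight a b y * N.[y]) ->
  (jacobi_defect a b qn qd N D).[x] = 0.
Proof.
move=> x11 Dx qdx rho_der rho'x rhoD.
have [x_gtN1 x_lt1] : -1 < x /\ x < 1 by apply/andP.
have w_neq0 := lt0r_neq0 (jacobi_weight_gt0 a b x11).
have x_m : 1 - x != 0 by rewrite subr_eq0 gt_eqF.
have x_p : 1 + x != 0 by rewrite gt_eqF //; lra.
have rhox : rho x = jacobi_weight a b x * N.[x] / D.[x].
  by rewrite -(nbhs_singleton rhoD) mulfK.
have : 'D_1 (rho * horner D) x = 'D_1 (jacobi_weight a b * horner N) x.
  exact: near_eq_derive.
have [_ ->] := is_deriveM (derivableP rho_der) (is_derive_poly D x).
have [_ ->] := is_deriveM (is_derive_jacobi_weight a b x11) (is_derive_poly N x).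
rewrite -derive1E rho'x rhox /GRing.scale /= => /eqP; rewrite -subr_eq0 => /eqP.
set Z := (X in X = 0) => Z0.
rewrite /jacobi_defect !(hornerD, hornerN, hornerM, hornerC, hornerX, horner_exp).
transitivity (qd.[x] * D.[x] * (1 - x) * (1 + x) / jacobi_weight a b x * Z).
  by rewrite /Z; field; rewrite w_neq0 Dx qdx x_m x_p.
by rewrite Z0 mulr0.
Qed.

End JacobiWeight.

Section EndpointMultiplicity.
Variable F : fieldType.
Implicit Types (c g : F) (p : {poly F}).

Lemma XsubC_mul_deriv_mulXn c p (i : nat) :
  ('X - c%:P) * (p * ('X - c%:P) ^+ i)^`() =
  ('X - c%:P) ^+ i * (('X - c%:P) * p^`() + p *+ i).
Proof.
rewrite derivM deriv_exp derivXsubC mul1r.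
by case: i => [|i]; rewrite ?expr0 ?mulr0n ?exprS /=; ring.
Qed.

Lemma horner_mul_XsubCn_neq0 c c' p (k : nat) :
  p.[c] != 0 -> c != c' -> (p * ('X - c'%:P) ^+ k).[c] != 0.
Proof.
by move=> pc cc'; rewrite hornerM horner_exp hornerXsubC mulf_neq0 ?expf_neq0 ?subr_eq0.
Qed.

Lemma mup_XsubCn_mul c (k : nat) p : ~~ root p c -> mup c (('X - c%:P) ^+ k * p) = k.
Proof. by move=> pc; rewrite mupMl // mup_XsubCX eqxx. Qed.

Lemma defect_endpoint_orders c g (qn qd f K N D N1 D1 : {poly F}) (i1 i2 : nat) :
  qn.[c] != 0 -> qd.[c] != 0 -> f.[c] != 0 -> N1.[c] != 0 -> D1.[c] != 0 ->
  K.[c] = f.[c] * g ->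
  N = N1 * ('X - c%:P) ^+ i1 -> D = D1 * ('X - c%:P) ^+ i2 ->
  qn * D ^+ 2 * (('X - c%:P) * f) =
    qd * (K * N * D + ('X - c%:P) * f * (N^`() * D - N * D^`())) ->
  i1 = i2.+1 \/ (i1 <= i2)%N /\ g = (i2 - i1)%:R.
Proof.
move=> qn_c qd_c f_c N1_c D1_c Kc hN hD defect; set e := 'X - c%:P in hN hD defect.
pose B := qd * (K * N1 * D1
  + f * ((e * N1^`() + N1 *+ i1) * D1 - N1 * (e * D1^`() + D1 *+ i2))).
have eN : e * N^`() = e ^+ i1 * (e * N1^`() + N1 *+ i1) by rewrite hN XsubC_mul_deriv_mulXn.
have eD : e * D^`() = e ^+ i2 * (e * D1^`() + D1 *+ i2) by rewrite hD XsubC_mul_deriv_mulXn.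
have E : e ^+ (i2 + i2).+1 * (qn * D1 ^+ 2 * f) = e ^+ (i1 + i2) * B.
  transitivity (qn * D ^+ 2 * (e * f)); first by rewrite hD exprS exprD; ring.
  rewrite defect (_ : e * f * _ = f * (e * N^`() * D - N * (e * D^`()))); last by ring.
  by rewrite eN eD hN hD /B exprD; ring.
have L_c : ~~ root (qn * D1 ^+ 2 * f) c by rewrite rootE !hornerE !mulf_neq0 ?expf_neq0.
have B_neq0 : B != 0.
  apply: contraNneq L_c => B0; move: E; rewrite B0 mulr0 => /eqP.
  by rewrite mulf_eq0 expf_eq0 polyXsubC_eq0 andbF /= => /eqP->; exact: root0.
have /(congr1 (mup c)) := E.
rewrite mup_XsubCn_mul // mupM ?expf_neq0 ?polyXsubC_eq0 // mup_XsubCX eqxx => orders.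
have Bc : B.[c] = qd.[c] * f.[c] * N1.[c] * D1.[c] * (g + i1%:R - i2%:R).
  by rewrite /B /e !(hornerE, hornerMn) subrr Kc; ring.
have [B_c | B_c] := eqVneq B.[c] 0; last first.
  by left; move: orders; rewrite mupNroot //; lia.
right; have B_root : (0 < mup c B)%N by rewrite -XsubC_dvd // dvdp_XsubCl rootE B_c.
have le_i12 : (i1 <= i2)%N by lia.
split=> //; apply/eqP; rewrite natrB // -subr_eq0 opprB addrA.
by move/eqP: B_c; rewrite Bc !mulf_eq0 (negPf qd_c) (negPf f_c) (negPf N1_c) (negPf D1_c).
Qed.

End EndpointMultiplicity.

Section Existence.
Variable R : realType.
Implicit Types (a b : R) (rho : R -> R) (qn qd : {poly R}).

Lemma factor_at_pm1 (p : {poly R}) : p != 0 -> exists (i j : nat) (p1 : {poly R}),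
  p = p1 * ('X - 1%:P) ^+ i * ('X - (-1)%:P) ^+ j /\ regpm p1.
Proof.
move=> p_neq0; have [i [p' p'_1 Dp]] := multiplicity_XsubC p 1.
rewrite p_neq0 /= in p'_1.
have p'_neq0 : p' != 0 by apply: contraNneq p'_1 => ->; rewrite root0.
have [j [p1 p1_N1 Dp']] := multiplicity_XsubC p' (-1).
rewrite p'_neq0 /= in p1_N1.
exists i, j, p1; split; first by rewrite Dp Dp' mulrAC.
split=> //; apply: contra p'_1 => /eqP p1_1.
by rewrite Dp' rootE hornerM p1_1 mul0r.
Qed.

Lemma powR_mul_expS_div (t a : R) (i : nat) : 0 < t ->
  powR t a * t ^+ i.+1 / t ^+ i = powR t (a + 1).
Proof.
move=> t_gt0; rewrite exprS mulrA mulfK ?expf_neq0 ?gt_eqF //.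
by rewrite powRD ?powRr1 ?ltW //; apply/implyP => _; rewrite gt_eqF.
Qed.

Lemma powR_nat_mul_exp_div (t : R) (i j : nat) : 0 < t -> (i <= j)%N ->
  powR t (j - i)%:R * t ^+ i / t ^+ j = 1.
Proof.
by move=> t_gt0 le_ij; rewrite powR_mulrn ?ltW // -exprD subnK // divff ?expf_neq0 ?gt_eqF.
Qed.

Lemma jacobi_factored a b rho (N D N1 D1 : {poly R}) (i1 j1 i2 j2 : nat) :
  N = N1 * ('X - 1%:P) ^+ i1 * ('X - (-1)%:P) ^+ j1 ->
  D = D1 * ('X - 1%:P) ^+ i2 * ('X - (-1)%:P) ^+ j2 ->
  cofin11 (fun x => D.[x] != 0 /\ rho x * D.[x] = jacobi_weight a b x * N.[x]) ->
  cofin11 (fun x => rho x =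
    powR (1 - x) a * (1 - x) ^+ i1 / (1 - x) ^+ i2 *
    (powR (1 + x) b * (1 + x) ^+ j1 / (1 + x) ^+ j2) *
    (((-1) ^+ i1 *: N1).[x] / ((-1) ^+ i2 *: D1).[x])).
Proof.
move=> hN hD; apply: cofin11W => x /andP[x_gtN1 x_lt1] [Dx rhoDx].
have horner_pm1 p i j : (p * ('X - 1%:P) ^+ i * ('X - (-1)%:P) ^+ j).[x] =
    ((-1) ^+ i *: p).[x] * (1 - x) ^+ i * (1 + x) ^+ j.
  rewrite hornerZ !hornerM !horner_exp !hornerXsubC.
  rewrite (_ : x - 1 = -1 * (1 - x)) 1?(_ : x - -1 = 1 + x) 1?exprMn; ring.
have -> : rho x = jacobi_weight a b x * N.[x] / D.[x] by rewrite -rhoDx mulfK.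
move: Dx; rewrite hN hD !horner_pm1 !mulf_eq0 !negb_or => /andP[/andP[D1x x_m] x_p].
by rewrite /jacobi_weight; field; rewrite D1x x_m x_p.
Qed.

Lemma jacobi_cases_of_orders a b rho (p r : {poly R}) (i1 j1 i2 j2 : nat) :
  regpm p -> regpm r ->
  i1 = i2.+1 \/ (i1 <= i2)%N /\ a = (i2 - i1)%:R ->
  j1 = j2.+1 \/ (j1 <= j2)%N /\ b = (j2 - j1)%:R ->
  cofin11 (fun x => rho x =
    powR (1 - x) a * (1 - x) ^+ i1 / (1 - x) ^+ i2 *
    (powR (1 + x) b * (1 + x) ^+ j1 / (1 + x) ^+ j2) * (p.[x] / r.[x])) ->
  case_i a b rho \/ case_ii a b rho \/ case_iii a b rho \/ case_iv a b rho.
Proof.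
move=> [p_1 p_N1] r_reg; have [r_1 r_N1] := r_reg.
have pr_1 : p.[1] / r.[1] != 0 by rewrite mulf_neq0 ?invr_eq0.
have pr_N1 : p.[-1] / r.[-1] != 0 by rewrite mulf_neq0 ?invr_eq0.
case=> [-> | [le_i ->]]; case=> [-> | [le_j ->]] => rho_fact.
- left; exists p, r; split=> //; apply: cofin11W rho_fact => x /andP[x_gtN1 x_lt1] ->.
  by rewrite !powR_mul_expS_div //; lra.
- right; right; left; split; last by exists (j2 - j1)%N.
  exists p, r; split=> //; split; last by rewrite mulf_neq0 // gt_eqF // powR_gt0 //; lra.
  apply: cofin11W rho_fact => x /andP[x_gtN1 x_lt1] ->.
  by rewrite powR_mul_expS_div ?(powR_nat_mul_exp_div _ le_j) ?mulr1; lra.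
- right; left; split; last by exists (i2 - i1)%N.
  exists p, r; split=> //; split; last by rewrite mulf_neq0 // gt_eqF // powR_gt0 //; lra.
  apply: cofin11W rho_fact => x /andP[x_gtN1 x_lt1] ->.
  by rewrite powR_mul_expS_div ?(powR_nat_mul_exp_div _ le_i) ?mul1r; lra.
- right; right; right; split; last by split; [exists (i2 - i1)%N | exists (j2 - j1)%N].
  exists p, r; split=> //; split=> //.
  apply: cofin11W rho_fact => x /andP[x_gtN1 x_lt1] ->.
  by rewrite (powR_nat_mul_exp_div _ le_i) ?(powR_nat_mul_exp_div _ le_j) ?mul1r; lra.
Qed.

Lemma quasi_rational_jacobi_ratio a b rho qn qd : qn != 0 -> qd != 0 ->
  quasi_rational rho ->
  cofin11 (fun x => derivable rho x 1 /\
                    derive1 rho x = qn.[x] / qd.[x] * jacobi_weight a b x) ->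
  exists N D : {poly R}, [/\ N != 0, D != 0 &
    cofin11 (fun x => rho x * D.[x] = jacobi_weight a b x * N.[x])].
Proof.
move=> qn_neq0 qd_neq0 [u [v [v_neq0 rho_log]]] rho_der.
have rhoD : cofin11 (fun x => rho x * (qd * u).[x] = jacobi_weight a b x * (qn * v).[x]).
  move: (cofin11_and (cofin11_and rho_log rho_der)
    (cofin11_and (cofin11_horner_neq0 v_neq0) (cofin11_horner_neq0 qd_neq0))).
  apply: cofin11W => x _ [[[_ [rho_x log_x]] [_ der_x]] [vx qdx]].
  have ux : u.[x] = derive1 rho x / rho x * v.[x] by rewrite log_x divfK.
  by rewrite !hornerM ux der_x; field; rewrite rho_x qdx.
have N_neq0 : qn * v != 0 by rewrite mulf_neq0.
exists (qn * v), (qd * u); split=> //.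
apply: contraNneq N_neq0 => D0; apply/eqP/poly_eq0_cofin11.
apply: cofin11W rhoD => x x11.
rewrite D0 horner0 mulr0 => /esym/eqP.
by rewrite mulf_eq0 (negPf (lt0r_neq0 (jacobi_weight_gt0 a b x11))) => /eqP.
Qed.

Lemma jacobi_defect_eq0 a b rho qn qd (N D : {poly R}) : qd != 0 -> D != 0 ->
  cofin11 (fun x => derivable rho x 1 /\
                    derive1 rho x = qn.[x] / qd.[x] * jacobi_weight a b x) ->
  cofin11 (fun x => rho x * D.[x] = jacobi_weight a b x * N.[x]) ->
  jacobi_defect a b qn qd N D = 0.
Proof.
move=> qd_neq0 D_neq0 rho_der rhoD; apply: poly_eq0_cofin11.
move: (cofin11_and (cofin11_and rho_der (cofin11_nbhs rhoD))
  (cofin11_and (cofin11_horner_neq0 D_neq0) (cofin11_horner_neq0 qd_neq0))).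
apply: cofin11W => x x11 [[[der_x rho'x] rhoD_x] [Dx qdx]].
exact: (jacobi_defect_root x11 Dx qdx der_x rho'x rhoD_x).
Qed.

Lemma jacobi_defect_orders a b qn qd (N D N1 D1 : {poly R}) (i1 j1 i2 j2 : nat) :
  regpm qn -> regpm qd -> regpm N1 -> regpm D1 ->
  N = N1 * ('X - 1%:P) ^+ i1 * ('X - (-1)%:P) ^+ j1 ->
  D = D1 * ('X - 1%:P) ^+ i2 * ('X - (-1)%:P) ^+ j2 ->
  jacobi_defect a b qn qd N D = 0 ->
  (i1 = i2.+1 \/ (i1 <= i2)%N /\ a = (i2 - i1)%:R) /\
  (j1 = j2.+1 \/ (j1 <= j2)%N /\ b = (j2 - j1)%:R).
Proof.
move=> [qn_1 qn_N1] [qd_1 qd_N1] [N1_1 N1_N1] [D1_1 D1_N1] hN hD.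
move/eqP; rewrite /jacobi_defect subr_eq0 => /eqP defect.
have one_neqN1 : (1 : R) != -1 by apply/eqP; lra.
have N1_neq1 : (-1 : R) != 1 by apply/eqP; lra.
split.
- apply: (defect_endpoint_orders (f := - ('X - (-1)%:P)) (K := b%:P * (1 - 'X) - a%:P * (1 + 'X))
    qn_1 qd_1 _ (horner_mul_XsubCn_neq0 j1 N1_1 one_neqN1)
    (horner_mul_XsubCn_neq0 j2 D1_1 one_neqN1) _
    (etrans hN (mulrAC _ _ _)) (etrans hD (mulrAC _ _ _))).
  + by rewrite !hornerE oppr_eq0 subr_eq0.
  + by rewrite !hornerE; ring.
  + by rewrite (_ : _ * - _ = 1 - 'X^2) // polyCN polyC1; ring.
- apply: (defect_endpoint_orders (f := 1 - 'X) (K := b%:P * (1 - 'X) - a%:P * (1 + 'X))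
    qn_N1 qd_N1 _ (horner_mul_XsubCn_neq0 i1 N1_N1 N1_neq1)
    (horner_mul_XsubCn_neq0 i2 D1_N1 N1_neq1) _ hN hD).
  + by rewrite !hornerE; apply/eqP; lra.
  + by rewrite !hornerE; ring.
  + by rewrite (_ : _ * (1 - 'X) = 1 - 'X^2) // polyCN polyC1; ring.
Qed.

Lemma jacobi_cases_exhaustive a b rho qn qd : regpm qn -> regpm qd ->
  quasi_rational rho ->
  cofin11 (fun x => derivable rho x 1 /\
                    derive1 rho x = qn.[x] / qd.[x] * jacobi_weight a b x) ->
  case_i a b rho \/ case_ii a b rho \/ case_iii a b rho \/ case_iv a b rho.
Proof.
move=> qn_reg qd_reg rho_qr rho_der; have qd_neq0 := regpm_neq0 qd_reg.
have [N [D [N_neq0 D_neq0 rhoD]]] :=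
  quasi_rational_jacobi_ratio (regpm_neq0 qn_reg) qd_neq0 rho_qr rho_der.
have [i1 [j1 [N1 [hN N1_reg]]]] := factor_at_pm1 N_neq0.
have [i2 [j2 [D1 [hD D1_reg]]]] := factor_at_pm1 D_neq0.
have [ha hb] := jacobi_defect_orders qn_reg qd_reg N1_reg D1_reg hN hD
  (jacobi_defect_eq0 qd_neq0 D_neq0 rho_der rhoD).
apply: (jacobi_cases_of_orders (regpmZ (negbT (signr_eq0 _ _)) N1_reg)
  (regpmZ (negbT (signr_eq0 _ _)) D1_reg) ha hb).
exact: jacobi_factored hN hD (cofin11_and (cofin11_horner_neq0 D_neq0) rhoD).
Qed.

End Existence.

Theorem mainTheorem19 (R : realType) (qn qd : {poly R}) (a b : R) (rho : R -> R)
  (hqd : regpm qd)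
  (hq1 : qn.[1] / qd.[1] != 0) (hqm1 : qn.[-1] / qd.[-1] != 0)
  (hrho : quasi_rational rho)
  (hder : cofin11 (fun x => derivable rho x 1 /\
            derive1 rho x = qn.[x] / qd.[x] * powR (1 - x) a * powR (1 + x) b)) :
  (case_i a b rho \/ case_ii a b rho \/ case_iii a b rho \/ case_iv a b rho) /\
  ~ (case_i a b rho /\ case_ii a b rho) /\ ~ (case_i a b rho /\ case_iii a b rho) /\
  ~ (case_i a b rho /\ case_iv a b rho) /\ ~ (case_ii a b rho /\ case_iii a b rho) /\
  ~ (case_ii a b rho /\ case_iv a b rho) /\ ~ (case_iii a b rho /\ case_iv a b rho).
Proof.
have qn_reg : regpm qn.
  by split; [move: hq1 | move: hqm1]; apply: contraNneq => ->; rewrite mul0r.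
split.
  apply: jacobi_cases_exhaustive qn_reg hqd hrho _.
  by apply: cofin11W hder => x _ [rho_der ->]; rewrite -mulrA.
repeat split.
- exact: case_i_ii_disjoint.
- exact: case_i_iii_disjoint.
- exact: case_i_iv_disjoint.
- exact: case_ii_iii_disjoint.
- exact: case_ii_iv_disjoint.
- exact: case_iii_iv_disjoint.
Qed.
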